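(* Let $L>0$ and let $\phi$ satisfy (H_φ) with $\phi(0)=+\infty$. Let $u\in H^1_0(0,L)$ with $\phi(u)\in L^2(0,L)$. If $\int_0^{\delta}\phi(t)\,dt=+\infty$ for every $\delta\in(0,1)$, then $u(x)\le0$ for all $x\in[0,L]$. If $\int_{-\delta}^0\phi(t)\,dt=+\infty$ for every $\delta\in(0,1)$, then $u(x)\ge0$ for all $x\in[0,L]$.
   Context: (H_φ): $\phi:\mathbb{R}\to\mathbb{R}\cup\{+\infty\}$ is continuous when $\mathbb{R}\cup\{+\infty\}$ carries its usual topology, and $\phi(s)<+\infty$ for every $s\neq0$. Functions in $H^1_0(0,L)$ are identified with their continuous representatives. *)

From HB Require Import structures.
From mathcomp Require Import all_boot all_order all_algebra.
From mathcomp Require Import all_classical all_reals all_analysis measurable_realfun.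
Set Implicit Arguments. Unset Strict Implicit. Unset Printing Implicit Defensive.
Import Order.TTheory GRing.Theory Num.Theory.
Import numFieldNormedType.Exports.
Local Open Scope classical_set_scope.
Local Open Scope ring_scope.

(* (H_phi): phi : R -> R ∪ {+oo}, continuous for the usual topology of
   R ∪ {+oo} (the subspace topology of \bar R), finite off 0. *)
Definition H_phi (R : realType) (phi : R -> \bar R) : Prop :=
  continuous phi /\ (forall s, phi s != -oo%E) /\
  (forall s, s != 0 -> phi s \is a fin_num).

(* H^1_0(0,L), identified with continuous representatives on [0,L]:
   u is absolutely continuous on [0,L], u(x) = \int_0^x g with g ∈ L^2(0,L),
   and u(0) = u(L) = 0. *)
Definition H10 (R : realType) (L : R) (u : R -> R) : Prop :=
  exists g : R -> R,
    measurable_fun `[0, L] g /\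
    (\int[lebesgue_measure]_(x in `[0%R, L]) (g x * g x)%:E < +oo)%E /\
    (forall x, 0 <= x <= L ->
       ((u x)%:E = \int[lebesgue_measure]_(t in `[0%R, x]) (g t)%:E)%E) /\
    u L = 0.

Definition L2_comp (R : realType) (L : R) (phi : R -> \bar R) (u : R -> R) : Prop :=
  measurable_fun `[0%R, L] (phi \o u : R -> \bar R) /\
  (\int[lebesgue_measure]_(x in `[0%R, L]) (phi (u x) * phi (u x)) < +oo)%E.

From HB Require Import structures.
From mathcomp Require Import all_boot all_order all_algebra.
From mathcomp Require Import all_classical all_reals all_analysis measurable_realfun.
From mathcomp Require Import lra.
Import Order.TTheory GRing.Theory Num.Theory.
Import numFieldNormedType.Exports.
Local Open Scope classical_set_scope.
Local Open Scope ring_scope.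

(* Suppose [u x > 0]. As [phi 0 = +oo] and [phi] is continuous, [phi >= 0]
   on some ]0, r[; pick [0 < c < min r 1] with [c <= u x]. Since [u] climbs
   from [u 0 = 0] to [u x >= c], for every [0 < s < c] a chain-rule inequality
   gives
     [\int_s^c phi <= \int_0^x (|phi (u z)| + 1) |u' z| dz],
   whose right-hand side is finite because [phi o u] and [u'] are square
   integrable. Letting [s -> 0] (monotone convergence) contradicts
   [\int_0^c phi = +oo]. The chain-rule inequality needs no differentiation:
   [y |-> - \int_(clamp (u y))^c phi - \int_0^y (|phi o u| + 1) |u'|] is locally
   nonincreasing, hence nonincreasing. The second claim is the first one for
   [-u] and [t |-> phi (- t)]. *)

Section real_facts.
Context {R : realType}.
Notation mu := (@lebesgue_measure R).

(* Real induction: the supremum [m] of the [y] such that [H <= H a] on [[a, y]]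
   is such a point, and the local hypothesis at [m] forbids [m < b]. *)
Lemma locally_nonincreasing_le {H : R -> R} {a b : R} : a <= b ->
  (forall y, a <= y <= b -> exists2 r, 0 < r &
     forall z, a <= z <= b -> `|z - y| < r ->
       (z <= y -> H y <= H z) /\ (y <= z -> H z <= H y)) ->
  H b <= H a.
Proof.
move=> ab loc.
pose T := [set y | a <= y <= b /\ forall z, a <= z <= y -> H z <= H a].
have Ta : T a.
  split; first by rewrite lexx ab.
  by move=> z /andP[az za]; have -> : z = a by apply/eqP; rewrite eq_le az za.
have supT : has_sup T by split; [exists a | exists b => y [/andP[_ ->]]].
pose m := sup T.
have am : a <= m by apply: sup_upper_bound.
have mb : m <= b by apply: ge_sup; [exists a | move=> y [/andP[_ ->]]].
have below z : a <= z < m -> H z <= H a.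
  move=> /andP[az zm].
  have mz0 : 0 < m - z by rewrite subr_gt0.
  have [y [_ Hy] zy] := sup_adherent mz0 supT.
  by apply: Hy; rewrite az ltW //; rewrite opprB addrC subrK in zy.
have [r r0 Hr] := loc m (introT andP (conj am mb)).
have Hm : H m <= H a.
  have [->|ma] := eqVneq m a; first exact: lexx.
  have am' : a < m by rewrite lt_neqAle eq_sym ma am.
  pose z := Num.max a (m - r / 2).
  have az : a <= z by rewrite le_max lexx.
  have zm : z < m by rewrite gt_max am' /=; lra.
  have zr : `|z - m| < r.
    have : m - r / 2 <= z by rewrite le_max lexx orbT.
    rewrite ltr0_norm ?subr_lt0 // opprB; lra.
  have [+ _] := Hr z (introT andP (conj az (ltW (lt_le_trans zm mb)))) zr.
  by move=> /(_ (ltW zm)) /le_trans; apply; apply: below; rewrite az zm.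
have [<-//|mb'] := eqVneq m b.
pose z := Num.min b (m + r / 2).
have mz : m < z by rewrite lt_min lt_neqAle mb' mb /=; lra.
have zb : z <= b by rewrite ge_min lexx.
suff Tz : T z by have := sup_upper_bound supT Tz; rewrite -/m leNgt mz.
split=> [|w /andP[aw wz]]; first by rewrite zb (le_trans am (ltW mz)).
case: (ltgtP w m) => [wm|mw|->//]; first by apply: below; rewrite aw wm.
have wr : `|w - m| < r.
  have : w <= m + r / 2 by apply: (le_trans wz); rewrite ge_min lexx orbT.
  rewrite gtr0_norm ?subr_gt0 //; lra.
have [_ +] := Hr w (introT andP (conj aw (le_trans wz zb))) wr.
by move=> /(_ (ltW mw)) /le_trans; apply.
Qed.

Lemma continuous_within_dist_lt {f : R -> R} {A : set R} {y e : R} :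
  {within A, continuous f} -> A y -> 0 < e ->
  exists2 r, 0 < r & forall z, A z -> `|z - y| < r -> `|f z - f y| < e.
Proof.
move=> cf Ay e0.
have /cvgrPdist_lt/(_ e e0)/nbhs_ballP[r r0 Hr] := (subspace_continuousP A f).1 cf y Ay.
by exists r => // z Az zy; rewrite distrC; apply: Hr => //; rewrite /ball /= distrC.
Qed.

Lemma continuous_at_dist_lt {f : R -> R} {y e : R} : {for y, continuous f} ->
  0 < e -> exists2 r, 0 < r & forall z, `|z - y| < r -> `|f z - f y| < e.
Proof.
move=> /cvgrPdist_lt cf /cf/nbhs_ballP[r r0 Hr].
by exists r => // z zy; rewrite distrC; apply: Hr; rewrite /ball /= distrC.
Qed.

Lemma fine_continuous (phi : R -> \bar R) t : {for t, continuous phi} ->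
  phi t \is a fin_num -> {for t, continuous (fine \o phi)}.
Proof. by move=> cphi ft; apply: fine_cvg; rewrite fineK. Qed.

Lemma Rintegral_itvccB (f : R -> R) {a z b : R} : a <= z -> z <= b ->
  mu.-integrable `[a, b] (EFin \o f) ->
  \int[mu]_(t in `[a, b]) f t - \int[mu]_(t in `[a, z]) f t =
  \int[mu]_(t in `[z, b]) f t.
Proof.
move=> az zb intf; rewrite Rintegral_itvB ?bnd_simp // Rintegral_itv_obnd_cbnd //.
by apply: integrableS intf => //; apply: subset_itvr; rewrite bnd_simp.
Qed.

Lemma integrable_itvcc_cst (a b k : R) : mu.-integrable `[a, b] (EFin \o cst k).
Proof.
apply: continuous_compact_integrable; first exact: segment_compact.
by apply: continuous_subspaceT => ?; exact: cst_continuous.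
Qed.

Lemma Rintegral_itvcc_le_mul (f : R -> R) (a b M : R) : a <= b ->
  mu.-integrable `[a, b] (EFin \o f) -> (forall t, a <= t <= b -> f t <= M) ->
  \int[mu]_(t in `[a, b]) f t <= M * (b - a).
Proof.
move=> ab intf fM.
have -> : M * (b - a) = \int[mu]_(t in `[a, b]) M.
  rewrite Rintegral_cst //= lebesgue_measure_itv /= lte_fin.
  by move: ab; rewrite le_eqVlt => /predU1P[->|->]; rewrite ?ltxx ?subrr ?mulr0 // mulrC.
by apply: le_Rintegral => //; exact: integrable_itvcc_cst.
Qed.

Lemma dist_lt_between {y r z1 z2 t : R} : z1 <= t <= z2 ->
  `|z1 - y| < r -> `|z2 - y| < r -> `|t - y| < r.
Proof.
rewrite !ltr_norml => /andP[? ?] /andP[? ?] /andP[? ?]; apply/andP; split; lra.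
Qed.

End real_facts.

Definition clamp {R : realType} (s c p : R) := Num.min (Num.max p s) c.

Section clamp.
Context {R : realType} {s c : R}.
Hypothesis sc : s <= c.

Lemma clamp_lo {p : R} : p <= s -> clamp s c p = s.
Proof. by move=> ps; rewrite /clamp max_r // min_l. Qed.

Lemma clamp_hi {p : R} : c <= p -> clamp s c p = c.
Proof. by move=> cp; rewrite /clamp max_l ?(le_trans sc) // min_r. Qed.

Lemma clamp_id {p : R} : s <= p <= c -> clamp s c p = p.
Proof. by move=> /andP[sp pc]; rewrite /clamp max_l // min_l. Qed.

Lemma clampP (p : R) : [\/ p <= s /\ clamp s c p = s, c <= p /\ clamp s c p = c |
                    s <= p <= c /\ clamp s c p = p].
Proof.
have [ps|sp] := leP p s; first by apply: Or31; rewrite clamp_lo.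
have [cp|pc] := leP c p; first by apply: Or32; rewrite clamp_hi.
by apply: Or33; rewrite clamp_id // (ltW sp) (ltW pc).
Qed.

Lemma clamp_itv (p : R) : s <= clamp s c p <= c.
Proof. by case: (clampP p) => -[h ->]; rewrite ?lexx ?sc. Qed.

Lemma clamp_dist_le (p q : R) : `|clamp s c q - clamp s c p| <= `|q - p|.
Proof.
have h1 := ler_norm (q - p); have h2 := ler_norm (p - q); rewrite distrC in h2.
case: (clampP p) => -[hp ->]; case: (clampP q) => -[hq ->];
  rewrite ler_norml; try case/andP: hp => hp1 hp2; try case/andP: hq => hq1 hq2;
  apply/andP; split; have := sc; lra.
Qed.

End clamp.

Section change_of_variables.
Context {R : realType}.
Notation mu := (@lebesgue_measure R).
Variables (f u g : R -> R) (s c x : R).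
Hypotheses (sc : s < c) (x0 : 0 <= x).
Hypothesis cf : {in `[s, c], continuous f}.
Hypothesis f0 : forall t, s <= t <= c -> 0 <= f t.
Hypothesis cu : {within `[0, x], continuous u}.
Hypothesis u_var : forall y1 y2, 0 <= y1 -> y1 <= y2 -> y2 <= x ->
  `|u y2 - u y1| <= \int[mu]_(t in `[y1, y2]) `|g t|.
Hypothesis intg : mu.-integrable `[0, x] (EFin \o g).
Hypothesis intk :
  mu.-integrable `[0, x] (EFin \o (fun z => (`|f (u z)| + 1) * `|g z|)).

Let k z := (`|f (u z)| + 1) * `|g z|.
Let G v := \int[mu]_(t in `[v, c]) f t.
Let w y := clamp s c (u y).
Let scW : s <= c. Proof. exact: ltW. Qed.

Let intf v1 v2 : s <= v1 -> v2 <= c -> mu.-integrable `[v1, v2] (EFin \o f).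
Proof.
move=> sv1 v2c; apply: continuous_compact_integrable; first exact: segment_compact.
apply: continuous_in_subspaceT => t; rewrite inE /= !in_itv /= => /andP[v1t tv2].
by apply: cf; rewrite in_itv /= (le_trans sv1 v1t) (le_trans tv2 v2c).
Qed.

Let intk_sub z1 z2 : 0 <= z1 -> z2 <= x -> mu.-integrable `[z1, z2] (EFin \o k).
Proof. by move=> z10 z2x; apply: integrableS intk => //; apply: subset_itvScc. Qed.

Let GB v1 v2 : s <= v1 -> v1 <= v2 -> v2 <= c ->
  G v1 - G v2 = \int[mu]_(t in `[v1, v2]) f t.
Proof.
move=> sv1 v12 v2c; rewrite /G -(Rintegral_itvccB f v12 v2c) ?intf //; lra.
Qed.

Let G_nonincreasing {v1 v2 : R} : s <= v1 -> v1 <= v2 -> v2 <= c -> G v2 <= G v1.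
Proof.
move=> sv1 v12 v2c; rewrite -subr_ge0 GB //.
apply: Rintegral_ge0 => t /=; rewrite in_itv /= => /andP[v1t tv2].
by apply: f0; rewrite (le_trans sv1 v1t) (le_trans tv2 v2c).
Qed.

Let dominated_near y := exists2 r, 0 < r & forall z1 z2,
  0 <= z1 -> z1 <= z2 -> z2 <= x -> `|z1 - y| < r -> `|z2 - y| < r ->
  G (w z1) - G (w z2) <= \int[mu]_(t in `[z1, z2]) k t.

Let w_locally_constant {y : R} : 0 <= y <= x -> ~~ (s <= u y <= c) ->
  exists2 r, 0 < r & forall z, 0 <= z <= x -> `|z - y| < r -> w z = w y.
Proof.
move=> yx; rewrite negb_and -!ltNge => /orP[uys|cuy].
  have gap : 0 < s - u y by rewrite subr_gt0.
  have [r r0 u_near] := continuous_within_dist_lt cu yx gap.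
  exists r => // z zx zy; rewrite /w !clamp_lo ?(ltW uys) //.
  have := u_near z zx zy; have := ler_norm (u z - u y); lra.
have gap : 0 < u y - c by rewrite subr_gt0.
have [r r0 u_near] := continuous_within_dist_lt cu yx gap.
exists r => // z zx zy; rewrite /w !clamp_hi ?(ltW cuy) //.
have := u_near z zx zy; have := ler_norm (u y - u z); rewrite distrC; lra.
Qed.

(* Near a point where [s <= u y <= c], [f] is within [1/2] of [f (u y)] both on
   the range of [w] and along [u]; this slack is the [+ 1] in [k]. *)
Let dominated_near_inside y : 0 <= y <= x -> s <= u y <= c -> dominated_near y.
Proof.
move=> yx tau_in; set tau := u y in tau_in *.
have half_gt0 : 0 < 1 / 2 :> R by lra.
have cf_tau : {for tau, continuous f} by apply: cf; rewrite in_itv.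
have [rho rho0 f_near] := continuous_at_dist_lt cf_tau half_gt0.
have [r r0 u_near] := continuous_within_dist_lt cu yx rho0.
exists r => // z1 z2 z10 z12 z2x d1 d2.
have z1x : `[0, x]%classic z1 by rewrite /= in_itv /= z10 (le_trans z12 z2x).
have z2x' : `[0, x]%classic z2 by rewrite /= in_itv /= z2x (le_trans z10 z12).
have w_near z : `[0, x]%classic z -> `|z - y| < r -> `|w z - tau| < rho.
  move=> zx zy; rewrite -(clamp_id tau_in).
  exact: le_lt_trans (clamp_dist_le scW _ _) (u_near z zx zy).
have /andP[w1s w1c] := clamp_itv scW (u z1).
have /andP[w2s w2c] := clamp_itv scW (u z2).
have k_ge0 : 0 <= \int[mu]_(t in `[z1, z2]) k t.
  by apply: Rintegral_ge0 => t _; rewrite mulr_ge0 // addr_ge0.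
have [w21|w12] := leP (w z2) (w z1).
  by apply: le_trans k_ge0; rewrite subr_le0 G_nonincreasing.
have ftau_ge0 : 0 <= f tau by apply: f0.
have range_bound : \int[mu]_(t in `[w z1, w z2]) f t <= (f tau + 1 / 2) * (w z2 - w z1).
  apply: Rintegral_itvcc_le_mul => [||t t_in]; [exact: ltW | exact: intf |].
  have := f_near t (dist_lt_between t_in (w_near _ z1x d1) (w_near _ z2x' d2)).
  have := ler_norm (f t - f tau); lra.
have w_var : w z2 - w z1 <= \int[mu]_(t in `[z1, z2]) `|g t|.
  have := clamp_dist_le scW (u z1) (u z2); have := u_var _ _ z10 z12 z2x.
  have := ler_norm (w z2 - w z1); rewrite -/(w z1) -/(w z2); lra.
have path_bound : (f tau + 1 / 2) * \int[mu]_(t in `[z1, z2]) `|g t| <=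
    \int[mu]_(t in `[z1, z2]) k t.
  have intg12 : mu.-integrable `[z1, z2] (EFin \o (fun t => `|g t|)).
    by apply: integrable_norm; apply: integrableS intg => //; apply: subset_itvScc.
  rewrite -RintegralZl //; apply: le_Rintegral => //.
  - exact: eq_integrable (integrableZl _ (f tau + 1 / 2) intg12).
  - exact: intk_sub z10 z2x.
  move=> t; rewrite /= in_itv /= => t_in; rewrite /k ler_wpM2r //.
  have tx : `[0, x]%classic t.
    by case/andP: t_in => ? ?; rewrite /= in_itv /= (le_trans z10) ?(le_trans _ z2x).
  have := f_near (u t) (u_near t tx (dist_lt_between t_in d1 d2)).
  have := ler_norm (f (u t)); have := ler_norm (f tau - f (u t)); rewrite distrC; lra.
rewrite GB //; last exact: ltW.
apply: (le_trans range_bound); apply: le_trans path_bound.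
by apply: ler_wpM2l => //; lra.
Qed.

Let dominated_everywhere {y : R} : 0 <= y <= x -> dominated_near y.
Proof.
move=> yx; have [tau_in|tau_out] := boolP (s <= u y <= c).
  exact: dominated_near_inside.
have [r r0 w_const] := w_locally_constant yx tau_out.
exists r => // z1 z2 z10 z12 z2x d1 d2.
rewrite !w_const ?subrr ?z10 ?z2x ?(le_trans z12 z2x) ?(le_trans z10 z12) //.
by apply: Rintegral_ge0 => t _; rewrite mulr_ge0 // addr_ge0.
Qed.

Let H y := - G (w y) - \int[mu]_(t in `[0, y]) k t.

Let H_step z1 z2 : 0 <= z1 -> z1 <= z2 -> z2 <= x ->
  G (w z1) - G (w z2) <= \int[mu]_(t in `[z1, z2]) k t -> H z2 <= H z1.
Proof.
move=> z10 z12 z2x; rewrite -(Rintegral_itvccB k z10 z12) ?intk_sub // /H; lra.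
Qed.

Lemma change_of_variables_Rintegral_le : u 0 <= s -> c <= u x ->
  \int[mu]_(t in `[s, c]) f t <=
  \int[mu]_(z in `[0, x]) ((`|f (u z)| + 1) * `|g z|).
Proof.
move=> u0s cux.
have : H x <= H 0.
  apply: locally_nonincreasing_le x0 _ => y yx.
  have [r r0 dom] := dominated_everywhere yx; case/andP: yx => y0 yx.
  have yy : `|y - y| < r by rewrite subrr normr0.
  exists r => // z /andP[z0 zx] zy.
  by split=> [zy'|yz']; apply: H_step => //; apply: dom.
rewrite /H /w (clamp_lo scW u0s) (clamp_hi scW cux) /G !set_itv1 !Rintegral_set1; lra.
Qed.

End change_of_variables.

Section improper_integral.
Context {R : realType}.
Notation mu := (@lebesgue_measure R).

Lemma ge0_integral_itvoo_le {f : R -> R} {c K : R} : 0 < c ->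
  {in `]0, c], continuous f} -> (forall t, 0 < t <= c -> 0 <= f t) ->
  (forall s, 0 < s < c -> \int[mu]_(t in `[s, c]) f t <= K) ->
  (\int[mu]_(t in `]0%R, c[) (f t)%:E <= K%:E)%E.
Proof.
move=> c0 cf f0 bnd.
pose a n := c / n.+2%:R.
have a_itv n : 0 < a n < c.
  by rewrite divr_gt0 //= ltr_pdivrMr // ltr_pMr // ltr1n.
have a_nonincr n m : (n <= m)%N -> a m <= a n.
  by move=> nm; rewrite ler_pM2l // lef_pV2 ?posrE // ler_nat ltnS.
pose F n := `[a n, c[%classic.
have F_nondecr : nondecreasing_seq F.
  move=> n m nm; rewrite subsetEset /F => t /=; rewrite !in_itv /= => /andP[ant ->].
  by rewrite (le_trans (a_nonincr _ _ nm) ant).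
have cupF : \bigcup_n F n = `]0, c[%classic.
  apply/seteqP; split=> t /=.
    move=> [n _]; rewrite /F /= !in_itv /= => /andP[ant ->].
    by case/andP: (a_itv n) => /lt_le_trans->.
  rewrite in_itv /= => /andP[t0 tc]; exists (Num.truncn (c / t)) => //.
  rewrite /F /= in_itv /= tc andbT ler_pdivrMr // mulrC -ler_pdivrMr //.
  by rewrite ltW // (lt_trans (truncnS_gt _)) // ltr_nat.
have intf n : mu.-integrable `[a n, c] (EFin \o f).
  have /andP[an0 anc] := a_itv n.
  apply: continuous_compact_integrable; first exact: segment_compact.
  apply: continuous_in_subspaceT => t; rewrite inE /= in_itv /= => /andP[ant tc].
  by apply: cf; rewrite in_itv /= tc (lt_le_trans an0 ant).
have intfF n : mu.-integrable (F n) (EFin \o f).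
  rewrite /F; apply: integrableS (intf n) => // t /=.
  by rewrite !in_itv /= => /andP[-> /ltW ->].
have f0F n t : F n t -> (0 <= (f t)%:E)%E.
  rewrite /F /= in_itv /= lee_fin => /andP[ant tc]; apply: f0.
  by case/andP: (a_itv n) => an0 _; rewrite (lt_le_trans an0 ant) ltW.
have := ge0_nondecreasing_set_cvg_integral (mu := mu) F_nondecr (fun n => measurable_itv _)
  (fun n => measurable_int mu (intfF n)) f0F.
rewrite cupF => cvgF; rewrite -(cvg_lim _ cvgF) //.
apply: lime_le; first exact: cvgP cvgF.
apply: nearW => n.
have /fineK <- : (\int[mu]_(x in F n) (EFin \o f) x)%E \is a fin_num.
  by apply: integrable_fin_num (intfF n); rewrite /F.
rewrite lee_fin -/(Rintegral _ _ _) Rintegral_itv_bndo_bndc; first exact: bnd.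
exact: intfF.
Qed.

End improper_integral.

Section integrability.
Context {R : realType}.
Notation mu := (@lebesgue_measure R).

Lemma ge0_lty_integrable (D : set R) (h : R -> \bar R) : measurable D ->
  measurable_fun D h -> (forall x, D x -> (0 <= h x)%E) ->
  (\int[mu]_(x in D) h x < +oo)%E -> mu.-integrable D h.
Proof.
move=> mD mh h0 hfin; apply/integrableP; split => //.
by under eq_integral => x /set_mem Dx do rewrite gee0_abs ?h0 //.
Qed.

Lemma integrable_sqr_itvcc {a b : R} {g : R -> R} : measurable_fun `[a, b] g ->
  (\int[mu]_(x in `[a, b]) (g x * g x)%:E < +oo)%E ->
  mu.-integrable `[a, b] (fun x => (g x * g x)%:E).
Proof.
move=> mg g2; apply: ge0_lty_integrable => //.
- by apply/measurable_EFinP; exact: measurable_funM.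
- by move=> x _; rewrite lee_fin -expr2 sqr_ge0.
Qed.

Lemma integrable_itvcc_of_sqr {a b : R} {g : R -> R} : measurable_fun `[a, b] g ->
  (\int[mu]_(x in `[a, b]) (g x * g x)%:E < +oo)%E ->
  mu.-integrable `[a, b] (EFin \o g).
Proof.
move=> mg g2.
have dom : mu.-integrable `[a, b] (fun x => (g x * g x)%:E + 1%:E)%E.
  by apply: integrableD => //; [exact: integrable_sqr_itvcc | exact: integrable_itvcc_cst].
apply: le_integrable dom => //; first exact/measurable_EFinP.
move=> x _; rewrite -EFinD /= lee_fin [leRHS]ger0_norm; last first.
  by rewrite addr_ge0 // -expr2 sqr_ge0.
rewrite -expr2 -real_normK ?num_real //.
by have := sqr_ge0 (`|g x| - 1); have := normr_ge0 (g x); nra.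
Qed.

(* Dominated by [h^2 + g^2 + 1], as [2 |h| |g| <= h^2 + g^2] and
   [2 |g| <= g^2 + 1]. *)
Lemma integrable_weight_itvcc {a b : R} {h : R -> \bar R} {g : R -> R} :
  measurable_fun `[a, b] g -> (\int[mu]_(x in `[a, b]) (g x * g x)%:E < +oo)%E ->
  measurable_fun `[a, b] h -> (\int[mu]_(x in `[a, b]) (h x * h x) < +oo)%E ->
  mu.-integrable `[a, b] (EFin \o (fun z => (`|fine (h z)| + 1) * `|g z|)).
Proof.
move=> mg g2 mh h2.
have int_h2 : mu.-integrable `[a, b] (fun x => h x * h x)%E.
  apply: ge0_lty_integrable => //; first exact: emeasurable_funM.
  by move=> x _; rewrite -expe2 sqre_ge0.
have int_dom : mu.-integrable `[a, b]
    (fun x => h x * h x + ((g x * g x)%:E + 1%:E))%E.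
  apply: integrableD => //; apply: integrableD => //.
    exact: integrable_sqr_itvcc.
  exact: integrable_itvcc_cst.
apply: le_integrable int_dom => //.
  apply/measurable_EFinP; apply: measurable_funM; last exact: measurableT_comp.
  by apply: measurable_funD => //; do 2 apply: measurableT_comp => //.
move=> x _ /=; case: (h x) => [r| |] /=; rewrite ?leey // lee_fin.
rewrite [leLHS]ger0_norm ?mulr_ge0 ?addr_ge0 // [leRHS]ger0_norm; last first.
  by rewrite !addr_ge0 // -expr2 sqr_ge0.
rewrite -!expr2 -(real_normK (num_real r)) -(real_normK (num_real (g x))).
have := sqr_ge0 (`|r| - `|g x|); have := sqr_ge0 (`|g x| - 1).
by have := normr_ge0 r; have := normr_ge0 (g x); nra.
Qed.

End integrability.

Section primitive.
Context {R : realType}.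
Notation mu := (@lebesgue_measure R).
Context {L : R} {u g : R -> R}.
Hypothesis intg : mu.-integrable `[0, L] (EFin \o g).
Hypothesis u_primitive : forall y, 0 <= y <= L -> u y = \int[mu]_(t in `[0, y]) g t.

Lemma primitive_continuous : 0 <= L -> {within `[0, L], continuous u}.
Proof.
move=> L0; apply: subspace_eq_continuous (parameterized_integral_continuous L0 intg).
by move=> y; rewrite inE /= in_itv /= => yL; rewrite /from_subspace /= u_primitive.
Qed.

Lemma primitive_dist_le y1 y2 : 0 <= y1 -> y1 <= y2 -> y2 <= L ->
  `|u y2 - u y1| <= \int[mu]_(t in `[y1, y2]) `|g t|.
Proof.
move=> y10 y12 y2L.
have intg2 : mu.-integrable `[0, y2] (EFin \o g).
  by apply: integrableS intg => //; apply: subset_itvScc; rewrite bnd_simp.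
rewrite !u_primitive ?y10 ?y2L ?(le_trans y10 y12) ?(le_trans y12 y2L) //.
rewrite (Rintegral_itvccB g y10 y12 intg2); apply: le_normr_Rintegral => //.
by apply: integrableS intg2 => //; apply: subset_itvScc; rewrite bnd_simp.
Qed.

End primitive.

Section reflection.
Context {R : realType}.
Notation mu := (@lebesgue_measure R).

Lemma measurable_fun_fin_continuous (D : set R) (phi : R -> \bar R) :
  measurable D -> continuous phi -> (forall t, D t -> phi t \is a fin_num) ->
  measurable_fun D phi.
Proof.
move=> mD cphi phi_fin.
have mf : measurable_fun D (fine \o phi).
  apply: subspace_continuous_measurable_fun => //.
  apply: continuous_in_subspaceT => t /set_mem Dt.
  by apply: fine_continuous; [exact: cphi | exact: phi_fin].
apply: (eq_measurable_fun (EFin \o (fine \o phi))); last exact/measurable_EFinP.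
by move=> t /set_mem Dt; rewrite /= fineK // phi_fin.
Qed.

Lemma ge0_integral_itvoo_oppr {phi : R -> \bar R} {c : R} :
  measurable_fun `](- c)%R, 0%R[ phi ->
  (forall t, - c < t < 0 -> (0 <= phi t)%E) ->
  (\int[mu]_(t in `]0%R, c[) phi (- t)%R = \int[mu]_(t in `](- c)%R, 0%R[) phi t)%E.
Proof.
move=> mphi phi0.
have -> : `]0%R, c[%classic = (-%R : _ -> measurableTypeR R) @^-1` `](- c)%R, 0%R[.
  by rewrite opp_preimage_itvbndbnd /= oppr0 opprK.
rewrite -ge0_integral_pushforward //=.
- by apply: eq_measure_integral => A mA _; exact: lebesgue_measureN.
- by move=> t /set_mem; rewrite /= in_itv /=; exact: phi0.
Qed.

Lemma integral_itv0c_oppr_pinfty (phi : R -> \bar R) :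
  continuous phi -> (forall s, s != 0 -> phi s \is a fin_num) ->
  (forall d, 0 < d < 1 -> (\int[mu]_(t in `](- d)%R, 0%R[) phi t = +oo)%E) ->
  forall c, 0 < c < 1 -> (forall t, 0 < t <= c -> (0 <= (phi \o -%R) t)%E) ->
  (\int[mu]_(t in `]0%R, c[) (phi \o -%R) t = +oo)%E.
Proof.
move=> cphi phi_fin phi_infty c c01 phi_ge0.
have mphi : measurable_fun `](- c)%R, 0%R[ phi.
  apply: measurable_fun_fin_continuous => // t; rewrite /= in_itv /= => /andP[_ t0].
  by rewrite phi_fin ?lt_eqF.
rewrite /= (ge0_integral_itvoo_oppr mphi) ?phi_infty // => t /andP[ct t0].
rewrite -[t]opprK; apply: phi_ge0.
by rewrite oppr_gt0 t0 lerNl ltW.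
Qed.

End reflection.

Section one_sided.
Context {R : realType}.
Notation mu := (@lebesgue_measure R).

Lemma le0_of_integral_itv0_pinfty (phi : R -> \bar R) (u g : R -> R) (L : R) :
  continuous phi -> (forall s, s != 0 -> phi s \is a fin_num) -> phi 0 = +oo%E ->
  u 0 = 0 -> {within `[0, L], continuous u} ->
  (forall y1 y2, 0 <= y1 -> y1 <= y2 -> y2 <= L ->
     `|u y2 - u y1| <= \int[mu]_(t in `[y1, y2]) `|g t|) ->
  mu.-integrable `[0, L] (EFin \o g) ->
  mu.-integrable `[0, L] (EFin \o (fun z => (`|fine (phi (u z))| + 1) * `|g z|)) ->
  (forall c, 0 < c < 1 -> (forall t, 0 < t <= c -> (0 <= phi t)%E) ->
     (\int[mu]_(t in `]0%R, c[) phi t = +oo)%E) ->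
  forall x, 0 <= x <= L -> u x <= 0.
Proof.
move=> cphi phi_fin phi0 u0 cu u_var intg intk phi_infty x /andP[x0 xL].
rewrite leNgt; apply/negP => ux.
have /nbhs_ballP[r /= r0 phi_ge0] : \forall t \near 0, (0 <= phi t)%E.
  have : phi t @[t --> 0] --> +oo%E by rewrite -phi0; exact: cphi.
  by move/cvgeyPger => /(_ 0 (num_real 0)).
have [c [c0 cux cr c1]] : exists c : R, [/\ 0 < c, c <= u x, c < r & c < 1].
  pose m := Num.min (u x) (Num.min r 1).
  have [m0 mux mr m1] : [/\ 0 < m, m <= u x, m <= r & m <= 1].
    by rewrite /m !lt_min !ge_min ux r0 ltr01 !lexx !orbT.
  by clearbody m; exists (m / 2); split; lra.
have phi_fin_pos (t : R) : 0 < t -> phi t \is a fin_num.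
  by move=> t0; rewrite phi_fin ?gt_eqF.
have phi0c (t : R) : 0 < t <= c -> (0 <= phi t)%E.
  move=> /andP[t0 tc]; apply: phi_ge0.
  by rewrite /ball /= sub0r normrN gtr0_norm //; exact: le_lt_trans tc cr.
have cf : {in `]0, c], continuous (fine \o phi)}.
  move=> t; rewrite in_itv /= => /andP[t0 _].
  by apply: fine_continuous; [exact: cphi | exact: phi_fin_pos].
have x_sub : `[0, x] `<=` `[0, L] by apply: subset_itvScc; rewrite bnd_simp.
have bound (s : R) : 0 < s < c -> \int[mu]_(t in `[s, c]) (fine \o phi) t <=
    \int[mu]_(z in `[0, x]) ((`|fine (phi (u z))| + 1) * `|g z|).
  move=> /andP[s0 sc]; apply: change_of_variables_Rintegral_le => //.
  - move=> t; rewrite in_itv /= => /andP[st tc].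
    by apply: cf; rewrite in_itv /= tc (lt_le_trans s0 st).
  - by move=> t /andP[st tc]; apply/fine_ge0/phi0c; rewrite tc (lt_le_trans s0 st).
  - exact: continuous_subspaceW x_sub cu.
  - by move=> y1 y2 y10 y12 y2x; apply: u_var => //; exact: le_trans y2x xL.
  - exact: integrableS intg.
  - exact: integrableS intk.
  - by rewrite u0 ltW.
have int_fine : (\int[mu]_(t in `]0%R, c[) ((fine \o phi) t)%:E =
    \int[mu]_(t in `]0%R, c[) phi t)%E.
  apply: eq_integral => t; rewrite inE /= in_itv /= => /andP[t0 _].
  by rewrite fineK //; exact: phi_fin_pos.
have := ge0_integral_itvoo_le c0 cf (fun t tc => fine_ge0 (phi0c t tc)) bound.
by rewrite int_fine phi_infty ?c0 // leNgt ltey.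
Qed.

End one_sided.

Theorem mainTheorem7 (R : realType) (L : R) (phi : R -> \bar R) (u : R -> R) :
  0 < L -> H_phi phi -> phi 0 = +oo%E -> H10 L u -> L2_comp L phi u ->
  ((forall delta : R, 0 < delta < 1 ->
      (\int[lebesgue_measure]_(t in `]0%R, delta[) phi t = +oo)%E) ->
    forall x, 0 <= x <= L -> u x <= 0) /\
  ((forall delta : R, 0 < delta < 1 ->
      (\int[lebesgue_measure]_(t in `](- delta)%R, 0%R[) phi t = +oo)%E) ->
    forall x, 0 <= x <= L -> 0 <= u x).
Proof.
move=> L0 [cphi [_ phi_fin]] phi0 [g [mg [g2 [u_repr _]]]] [mphiu phiu2].
have intg := integrable_itvcc_of_sqr mg g2.
have u_primitive y : 0 <= y <= L -> u y = \int[lebesgue_measure]_(t in `[0, y]) g t.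
  by move=> yL; rewrite /Rintegral -u_repr.
have u0 : u 0 = 0 by rewrite u_primitive ?lexx ?ltW // set_itv1 Rintegral_set1.
have cu := primitive_continuous intg u_primitive (ltW L0).
have u_var := primitive_dist_le intg u_primitive.
have intk := integrable_weight_itvcc mg g2 mphiu phiu2.
split=> [phi_infty|phi_infty x xL].
  apply: le0_of_integral_itv0_pinfty cphi phi_fin phi0 u0 cu u_var intg intk _.
  by move=> c c01 _; exact: phi_infty.
rewrite -oppr_le0.
apply: (le0_of_integral_itv0_pinfty (phi \o -%R) (fun y => - u y) g) xL.
- by move=> t; apply: continuous_comp; [exact: oppr_continuous | exact: cphi].
- by move=> s s0; apply: phi_fin; rewrite oppr_eq0.
- by rewrite /= oppr0.
- by rewrite u0 oppr0.
- by move=> y; apply: continuous_comp (cu y) _; exact: oppr_continuous.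
- by move=> y1 y2 y10 y12 y2L; rewrite -opprD normrN; exact: u_var.
- exact: intg.
- by apply: eq_integrable intk => // z _; rewrite /= opprK.
exact: integral_itv0c_oppr_pinfty.
Qed.
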